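(* For $n\ge1$, $\operatorname{zir}(P_n)=\operatorname{Z}(P_n)=1$. For $n\ge4$, $\overline{\operatorname{Z}}(P_n)=2$. For $n\ge5$, $\operatorname{ZIR}(P_n)=\lfloor (n-1)/2\rfloor$.
   Context: $P_n$ is the path on $n$ vertices. Zero forcing: a blue vertex $u$ changes a white vertex $w$ to blue if $w$ is the only white neighbor of $u$; $B$ is a zero forcing set if from blue set $B$ eventually all vertices are blue; $\operatorname{Z}(G)$ is the minimum size of a zero forcing set and $\overline{\operatorname{Z}}(G)$ the maximum size of an inclusion-minimal zero forcing set. A nonempty $F\subseteq V(G)$ is a fort if every $v\notin F$ has $|N(v)\cap F|\ne1$. A private fort of $x\in S$ relative to $S$ is a fort $F$ with $S\cap F=\{x\}$; $S$ is a ZIr-set if every element of $S$ has a private fort. $\operatorname{zir}(G)$ / $\operatorname{ZIR}(G)$ are the minimum / maximum cardinality of an inclusion-maximal ZIr-set. *)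

From mathcomp Require Import all_boot.
From mathcomp Require Import boolp.

Set Implicit Arguments.
Unset Strict Implicit.
Unset Printing Implicit Defensive.

Section Graphs.
Variables (T : finType) (adj : rel T).

Definition nbhd (v : T) : {set T} := [set w | adj v w].

(* Sequential zero forcing: from blue set B, C is reachable by a chronological
   list of forces; a force u -> w requires u blue, w white and w the only white
   neighbour of u. *)
Inductive zf_reach (B : {set T}) : {set T} -> Prop :=
| zf_refl : zf_reach B B
| zf_force (C : {set T}) (u w : T) :
    zf_reach B C -> u \in C -> w \notin C ->
    nbhd u :\: C = [set w] -> zf_reach B (w |: C).

Definition zero_forcing (B : {set T}) : Prop := zf_reach B [set: T].

Definition minimal_zero_forcing (B : {set T}) : Prop :=
  zero_forcing B /\ (forall B' : {set T}, B' \proper B -> ~ zero_forcing B').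

Definition Z : nat :=
  \big[minn/#|T|]_(S : {set T} | `[< zero_forcing S >]) #|S|.

Definition Zbar : nat :=
  \max_(S : {set T} | `[< minimal_zero_forcing S >]) #|S|.

Definition fort (F : {set T}) : bool :=
  (F != set0) && [forall v in ~: F, #|nbhd v :&: F| != 1].

Definition private_fort (S : {set T}) (x : T) (F : {set T}) : bool :=
  fort F && (S :&: F == [set x]).

Definition ZIr_set (S : {set T}) : bool :=
  [forall x in S, exists F : {set T}, private_fort S x F].

Definition maximal_ZIr_set (S : {set T}) : bool :=
  ZIr_set S && [forall S' : {set T}, (S \proper S') ==> ~~ ZIr_set S'].

Definition zir : nat :=
  \big[minn/#|T|]_(S : {set T} | maximal_ZIr_set S) #|S|.

Definition ZIR : nat :=
  \max_(S : {set T} | maximal_ZIr_set S) #|S|.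

End Graphs.

Definition path_adj (n : nat) : rel 'I_n :=
  fun i j => (i.+1 == j :> nat) || (j.+1 == i :> nat).

(* Forts of a path contain both end vertices and never miss two consecutive
   vertices: a second missed vertex next to a missed one makes the miss
   propagate along the whole path.  Hence {0} is a maximal ZIr-set, since the
   private fort of any other element would contain 0, and a ZIr-set with three
   or more elements avoids both ends and has no two consecutive elements, so
   it has at most floor((n-1)/2) elements.  The odd interior vertices attain
   this bound.  On the zero forcing side, the first force of a path needs an
   end vertex or two consecutive blue vertices, and each of these seeds forces
   the whole path: so Z = 1, every minimal zero forcing set has at most two
   elements, and {1, 2} is a minimal one. *)

From HB Require Import structures.
From mathcomp Require Import all_boot.
From mathcomp Require Import boolp.
From mathcomp Require Import zify.

Set Implicit Arguments.
Unset Strict Implicit.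
Unset Printing Implicit Defensive.

(* Makes [bigD1] available for [\big[minn/x]], whose unit [x] is arbitrary. *)
HB.instance Definition _ := SemiGroup.isComLaw.Build nat minn minnA minnC.

Lemma bigminn_eq (I : finType) (P : pred I) (F : I -> nat) x k :
  k <= x -> (forall i, P i -> k <= F i) -> (exists2 i, P i & F i = k) ->
  \big[minn/x]_(i | P i) F i = k.
Proof.
move=> kx lbF [i Pi Fi]; apply/eqP; rewrite eqn_leq; apply/andP; split.
  by rewrite (bigD1 i) //= -Fi geq_minl.
by elim/big_ind: _ => // a b ka kb; rewrite leq_min ka.
Qed.

Lemma bigmax_eq (I : finType) (P : pred I) (F : I -> nat) k :
  (forall i, P i -> F i <= k) -> (exists2 i, P i & F i = k) ->
  \max_(i | P i) F i = k.
Proof.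
move=> ubF [i Pi Fi]; apply/eqP; rewrite eqn_leq -{2}Fi leq_bigmax_cond //.
by rewrite andbT; apply/bigmax_leqP.
Qed.

Section Graph.
Variables (T : finType) (adj : rel T).

Lemma zf_reach_set0 (C : {set T}) : zf_reach adj set0 C -> C = set0.
Proof. by elim=> // C' u w _ ->; rewrite inE. Qed.

Lemma zf_reach_first_force (B C : {set T}) : zf_reach adj B C ->
  C = B \/ exists2 u, u \in B & exists w, nbhd adj u :\: B = [set w].
Proof.
elim=> [|C' u w _ [->|first_force] uB _ Nu]; [by left | | by right].
by right; exists u => //; exists w.
Qed.

Lemma Z_eq1 v : zero_forcing adj [set v] -> Z adj = 1.
Proof.
move=> zfv; apply: bigminn_eq.
- by apply/card_gt0P; exists v.
- move=> S /asboolP zfS; rewrite card_gt0; apply: contraPneq zfS => ->.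
  by move/zf_reach_set0/setP/(_ v); rewrite !inE.
- by exists [set v]; [apply/asboolP | rewrite cards1].
Qed.

Lemma minimal_zero_forcing_card_le (S B : {set T}) :
  minimal_zero_forcing adj S -> B \subset S -> zero_forcing adj B ->
  #|S| <= #|B|.
Proof.
case=> _ minS BS zfB; rewrite leqNgt; apply/negP => ltBS.
by apply: (minS B) => //; rewrite properEcard BS.
Qed.

Lemma fort_setT (x0 : T) : fort adj [set: T].
Proof.
apply/andP; split; first by apply/set0Pn; exists x0.
by apply/forallP => v; rewrite !inE.
Qed.

Lemma fort_notin (F : {set T}) v :
  fort adj F -> v \notin F -> #|nbhd adj v :&: F| != 1.
Proof. by case/andP=> _ /forallP/(_ v); rewrite inE => /implyP. Qed.

Lemma ZIr_set1 x : ZIr_set adj [set x].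
Proof.
apply/forall_inP => y; rewrite inE => /eqP ->; apply/existsP; exists [set: T].
by rewrite /private_fort (fort_setT x) setIT eqxx.
Qed.

Lemma ZIr_setP (S : {set T}) x : ZIr_set adj S -> x \in S ->
  exists2 F, fort adj F & S :&: F = [set x].
Proof.
by move=> /forall_inP ZIrS /ZIrS /existsP [F /andP [fortF /eqP SF]]; exists F.
Qed.

(* A pair of vertices met by every fort leaves no room in a ZIr-set for
   anything else: the private fort of a third element would avoid both. *)
Lemma ZIr_set_sub_cover x y (S : {set T}) :
  (forall F, fort adj F -> (x \in F) || (y \in F)) ->
  ZIr_set adj S -> x \in S -> y \in S -> S \subset [set x; y].
Proof.
move=> cover ZIrS xS yS; apply/subsetP => z zS; rewrite !inE.
have [F fortF SF] := ZIr_setP ZIrS zS.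
have inSF u : u \in S -> u \in F -> u = z.
  by move=> uS uF; apply/set1P; rewrite -SF inE uS.
by case/orP: (cover F fortF) => [/(inSF x xS) | /(inSF y yS)] ->; rewrite eqxx ?orbT.
Qed.

Lemma maximal_ZIr_set1 v : (forall F, fort adj F -> v \in F) ->
  maximal_ZIr_set adj [set v].
Proof.
move=> fortv; rewrite /maximal_ZIr_set ZIr_set1; apply/forall_inP => S vS.
apply/negP => ZIrS; move/properP: vS => [/subsetP vS [u uS u'v]].
have {}vS : v \in S by apply: vS; rewrite inE.
have cover F : fort adj F -> (v \in F) || (v \in F) by move/fortv ->.
move/subsetP/(_ u uS): (ZIr_set_sub_cover cover ZIrS vS vS).
by rewrite setUid (negbTE u'v).
Qed.

Lemma zir_eq1 v : (forall F, fort adj F -> v \in F) -> zir adj = 1.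
Proof.
move=> fortv; apply: bigminn_eq.
- by apply/card_gt0P; exists v.
- move=> S /andP [_ /forall_inP maxS]; rewrite card_gt0.
  apply: contraTneq (ZIr_set1 v) => S0; apply: maxS.
  by rewrite S0 proper0 -card_gt0 cards1.
- by exists [set v]; [exact: maximal_ZIr_set1 | rewrite cards1].
Qed.

Lemma ZIR_eq (S : {set T}) k : (forall S', ZIr_set adj S' -> #|S'| <= k) ->
  ZIr_set adj S -> #|S| = k -> ZIR adj = k.
Proof.
move=> ub ZIrS cardS; apply: bigmax_eq => [S' /andP [/ub //]|].
exists S => //; rewrite /maximal_ZIr_set ZIrS; apply/forall_inP => S' /proper_card.
by apply: contraTN => /ub; rewrite cardS -leqNgt.
Qed.

(* The private fort of [x] is the complement of [S :\ x]: by independence,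
   every vertex of [S :\ x] has its whole neighbourhood inside it. *)
Lemma ZIr_set_independent (S : {set T}) :
  (forall u v, u \in S -> v \in S -> ~~ adj u v) ->
  (forall v, v \in S -> #|nbhd adj v| != 1) -> ZIr_set adj S.
Proof.
move=> indepS degS; apply/forall_inP => x xS; apply/existsP; exists (~: (S :\ x)).
rewrite /private_fort /fort -andbA; apply/and3P; split.
- by apply/set0Pn; exists x; rewrite !inE eqxx.
- apply/forall_inP => v; rewrite setCK => /setD1P [_ vS].
  suff /setIidPl -> : nbhd adj v \subset ~: (S :\ x) by apply: degS.
  apply/subsetP => w; rewrite !inE => vw; apply/nandP; right.
  by apply: contraTN vw; apply: indepS.
- apply/eqP/setP => y; rewrite !inE negb_and negbK.
  by case: (y =P x) => [->|]; rewrite ?xS //= andbN.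
Qed.

End Graph.

Section Path.
Variable m : nat.
Local Notation V := 'I_m.+1.
Local Notation adj := (@path_adj m.+1).

Lemma eq_inordE (x : V) k : k <= m -> (x == inord k) = (x == k :> nat).
Proof. by move=> km; rewrite -val_eqE /= inordK. Qed.

Lemma path_nbhdE (x y : V) :
  (y \in nbhd adj x) = (x.+1 == y :> nat) || (y.+1 == x :> nat).
Proof. by rewrite inE. Qed.

Lemma path_nbhd_interior (x : V) : 0 < x < m ->
  nbhd adj x = [set inord x.-1; inord x.+1].
Proof. by move=> x_int; apply/setP => y; rewrite path_nbhdE !inE !eq_inordE; lia. Qed.

(* Membership of the vertex with index [k], read as [false] out of range. *)
Definition nat_mem (F : {set V}) k := (k <= m) && (inord k \in F).

Lemma nat_memE F (x : V) : nat_mem F x = (x \in F).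
Proof. by rewrite /nat_mem inord_val -ltnS ltn_ord. Qed.

Lemma nat_mem_gt F k : m < k -> nat_mem F k = false.
Proof. by rewrite /nat_mem ltnNge => /negbTE ->. Qed.

(* A vertex outside a fort sees 0 or 2 fort vertices, so its two potential
   neighbours are either both in the fort or both outside it. *)
Lemma path_fort_gap F v : fort adj F -> v <= m -> ~~ nat_mem F v ->
  ((0 < v) && nat_mem F v.-1) = nat_mem F v.+1.
Proof.
move=> fortF vm vF.
have xF : (inord v : V) \notin F by move: vF; rewrite /nat_mem vm.
have memN (y : V) : (y \in nbhd adj (inord v) :&: F) =
    ((y == v.+1 :> nat) && nat_mem F v.+1) ||
    ((y.+1 == v) && ((0 < v) && nat_mem F v.-1)).
  rewrite in_setI path_nbhdE inordK // -nat_memE andb_orl; congr (_ || _).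
    by rewrite eq_sym; case: eqP => [->|].
  by case: eqP => [<- //|].
apply: contraNeq (fort_notin fortF xF) => neq; apply/cards1P.
case: (boolP (nat_mem F v.+1)) neq => [up | up'];
  rewrite ?eqb_id ?eqbF_neg ?negbK => lo.
  exists (inord v.+1); apply/setP => y.
  by rewrite memN up (negbTE lo) !inE eq_inordE; case/andP: up => // vm1 _; lia.
exists (inord v.-1); apply/setP => y.
by rewrite memN (negbTE up') lo !inE eq_inordE; case/andP: lo => // v0 _; lia.
Qed.

Definition double_gap F j := ~~ nat_mem F j && ~~ nat_mem F j.+1.

Lemma double_gap_succ F j : fort adj F -> double_gap F j -> double_gap F j.+1.
Proof.
move=> fortF /andP [j'F j1'F]; rewrite /double_gap j1'F /=.
have [j1m|mj] := leqP j.+1 m; last by rewrite nat_mem_gt //; apply: ltnW.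
by rewrite -(path_fort_gap fortF j1m j1'F) /= (negbTE j'F).
Qed.

Lemma double_gap_pred F j : fort adj F -> j < m ->
  double_gap F j.+1 -> double_gap F j.
Proof.
move=> fortF jm /andP [j1'F j2'F]; rewrite /double_gap j1'F andbT.
by move: (path_fort_gap fortF jm j1'F); rewrite (negbTE j2'F) /= => ->.
Qed.

(* A double gap spreads over the whole path, leaving the fort empty. *)
Lemma path_fort_no_double_gap F j : fort adj F -> j <= m -> ~~ double_gap F j.
Proof.
move=> fortF jm; apply/negP => gapj.
have gap_back d : d <= j -> double_gap F (j - d).
  elim: d => [|d IH] dj; first by rewrite subn0.
  by apply: (double_gap_pred fortF); [lia | rewrite subnSK // IH //; apply: ltnW].
have gap_all k : double_gap F k.
  have [jk|kj] := leqP j k; last by rewrite -(subKn (ltnW kj)) gap_back ?leq_subr.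
  by rewrite -(subnK jk); elim: (k - j) => //= d IH; apply: double_gap_succ.
case/andP: fortF => /set0Pn [x xF] _.
by move/andP: (gap_all x) => [+ _]; rewrite nat_memE xF.
Qed.

Lemma path_fort_ord0 F : fort adj F -> ord0 \in F.
Proof.
move=> fortF; rewrite -(nat_memE F ord0) /=.
apply: contraNT (path_fort_no_double_gap fortF (leq0n m)) => gap0.
by rewrite /double_gap gap0 -(path_fort_gap fortF (leq0n m) gap0).
Qed.

Lemma path_fort_ord_max F : fort adj F -> ord_max \in F.
Proof.
move=> fortF; have [m0|m_gt0] := posnP m.
  by rewrite (_ : ord_max = ord0) ?path_fort_ord0 //; apply: val_inj; rewrite /= m0.
rewrite -(nat_memE F ord_max) /=.
apply: contraNT (path_fort_no_double_gap fortF (leq_pred m)) => gapm.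
have := path_fort_gap fortF (leqnn m) gapm.
rewrite (nat_mem_gt F (ltnSn m)) m_gt0 /= => lo.
by rewrite /double_gap lo prednK.
Qed.

Lemma path_fort_adj F x y : fort adj F -> adj x y -> (x \in F) || (y \in F).
Proof.
move=> fortF; have cover (u w : V) : u.+1 = w :> nat -> (u \in F) || (w \in F).
  move=> uw; move: (path_fort_no_double_gap fortF (ltn_ord u)).
  by rewrite /double_gap negb_and !negbK uw !nat_memE.
by case/orP => /eqP /cover //; rewrite orbC.
Qed.

(* The first force comes from an end vertex or from a vertex one of whose two
   neighbours is already blue. *)
Lemma path_zero_forcing_seed B : zero_forcing adj B ->
  exists2 x, x \in B &
    [\/ x = ord0, x = ord_max | exists2 y, y \in B & y = x.+1 :> nat].
Proof.
case/zf_reach_first_force => [BT | [u uB [w Nu]]].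
  by exists ord0; [rewrite -BT inE | apply: Or31].
have [u0|u_gt0] := posnP u; first by exists u => //; apply/Or31/val_inj.
have [umax|u'max] := eqVneq u ord_max; first by exists u => //; apply: Or32.
have u_lt_m : u < m by move: (ltn_ord u) u'max; rewrite -val_eqE /=; lia.
have [lB|l'B] := boolP (inord u.-1 \in B).
  by exists (inord u.-1) => //; apply: Or33; exists u => //; rewrite inordK; lia.
have [rB|r'B] := boolP (inord u.+1 \in B).
  by exists u => //; apply: Or33; exists (inord u.+1); rewrite ?inordK.
have /set1P l_w : inord u.-1 \in [set w].
  by rewrite -Nu in_setD l'B path_nbhdE inordK; lia.
have /set1P r_w : inord u.+1 \in [set w].
  by rewrite -Nu in_setD r'B path_nbhdE inordK; lia.
by move: (congr1 val (etrans l_w (esym r_w))); rewrite /= !inordK; lia.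
Qed.

Definition segment lo hi : {set V} := [set i : V | lo <= i <= hi].

Lemma mem_segment lo hi (i : V) : (i \in segment lo hi) = (lo <= i <= hi).
Proof. by rewrite inE. Qed.

Lemma segment_full : segment 0 m = [set: V].
Proof. by apply/setP => i; move: (ltn_ord i); rewrite mem_segment inE; lia. Qed.

Lemma zf_reach_segment_succ B lo hi : (lo < hi) || (lo == 0) -> hi < m ->
  zf_reach adj B (segment lo hi) -> zf_reach adj B (segment lo hi.+1).
Proof.
move=> lo_hi hi_m reach.
have -> : segment lo hi.+1 = inord hi.+1 |: segment lo hi.
  by apply/setP => i; rewrite !(mem_segment, inE) eq_inordE //; lia.
apply: (zf_force (u := inord hi)) reach _ _ _.
- by rewrite mem_segment inordK; lia.
- by rewrite mem_segment inordK; lia.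
- apply/setP => i.
  by rewrite in_setD path_nbhdE !(mem_segment, inE) eq_inordE // inordK; lia.
Qed.

Lemma zf_reach_segment_pred B lo hi : (lo.+1 < hi) || (hi == m) -> lo < hi <= m ->
  zf_reach adj B (segment lo.+1 hi) -> zf_reach adj B (segment lo hi).
Proof.
move=> lo_hi seg reach.
have -> : segment lo hi = inord lo |: segment lo.+1 hi.
  by apply/setP => i; rewrite !(mem_segment, inE) eq_inordE; lia.
apply: (zf_force (u := inord lo.+1)) reach _ _ _.
- by rewrite mem_segment inordK; lia.
- by rewrite mem_segment inordK; lia.
- apply/setP => i; move: (ltn_ord i).
  rewrite in_setD path_nbhdE !(mem_segment, inE) eq_inordE ?inordK; lia.
Qed.

Lemma zf_reach_segment_right B lo hi : (lo < hi) || (lo == 0) -> hi <= m ->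
  zf_reach adj B (segment lo hi) -> zf_reach adj B (segment lo m).
Proof.
move=> lo_hi hi_m reach.
have grow d : d <= m - hi -> zf_reach adj B (segment lo (d + hi)).
  elim: d => // d IH d_le.
  rewrite addSn; apply: zf_reach_segment_succ; [lia | lia | apply: IH; lia].
by move: (grow _ (leqnn _)); rewrite subnK.
Qed.

Lemma zf_reach_segment_left B lo hi : (lo < hi) || (hi == m) -> lo <= hi <= m ->
  zf_reach adj B (segment lo hi) -> zf_reach adj B (segment 0 hi).
Proof.
move=> lo_hi seg reach.
have grow d : d <= lo -> zf_reach adj B (segment (lo - d) hi).
  elim: d => [|d IH] d_le; first by rewrite subn0.
  apply: zf_reach_segment_pred; [lia | lia |].
  by rewrite subnSK //; apply: IH; apply: ltnW.
by move: (grow _ (leqnn _)); rewrite subnn.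
Qed.

Lemma zero_forcing_segment lo hi : lo <= hi <= m ->
  [|| lo < hi, lo == 0 | hi == m] -> zero_forcing adj (segment lo hi).
Proof.
move=> seg; rewrite /zero_forcing -segment_full orbA => /orP [grow_r | /eqP hm].
  have reach := zf_reach_segment_right grow_r (proj2 (andP seg)) (zf_refl _ _).
  by apply: zf_reach_segment_left reach; rewrite ?eqxx ?orbT //; lia.
by rewrite hm; apply: zf_reach_segment_left (zf_refl _ _); rewrite ?eqxx ?orbT //; lia.
Qed.

Lemma zero_forcing_ord0 : zero_forcing adj [set ord0].
Proof.
have -> : [set ord0] = segment 0 0.
  by apply/setP => i; rewrite mem_segment inE -val_eqE /=; lia.
by apply: zero_forcing_segment.
Qed.

Lemma zero_forcing_ord_max : zero_forcing adj [set ord_max].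
Proof.
have -> : [set ord_max] = segment m m.
  by apply/setP => i; move: (ltn_ord i); rewrite mem_segment inE -val_eqE /=; lia.
by apply: zero_forcing_segment; rewrite ?leqnn ?eqxx ?orbT.
Qed.

Lemma zero_forcing_pair (x y : V) : y = x.+1 :> nat -> zero_forcing adj [set x; y].
Proof.
move=> yx; have := ltn_ord y; have -> : [set x; y] = segment x y.
  by apply/setP => i; rewrite mem_segment !inE -!val_eqE /=; lia.
by move=> y_le; apply: zero_forcing_segment; lia.
Qed.

Lemma Zbar_path : 3 <= m -> Zbar adj = 2.
Proof.
move=> m3; apply: bigmax_eq => [S /asboolP minS|].
  have [x xS [x0|xmax|[y yS yx]]] := path_zero_forcing_seed minS.1.
  - by rewrite (leq_trans (minimal_zero_forcing_card_le minS _ zero_forcing_ord0))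
      ?sub1set -?x0 ?cards1.
  - by rewrite (leq_trans (minimal_zero_forcing_card_le minS _ zero_forcing_ord_max))
      ?sub1set -?xmax ?cards1.
  - rewrite (leq_trans (minimal_zero_forcing_card_le minS _ (zero_forcing_pair yx))) //.
      by rewrite subUset !sub1set xS yS.
    by rewrite cards2; case: (_ != _).
pose S0 : {set V} := [set inord 1; inord 2].
have S0E z : (z \in S0) = (z == 1 :> nat) || (z == 2 :> nat).
  by rewrite !inE !eq_inordE //; lia.
exists S0; last by rewrite cards2 eq_inordE ?inordK //; lia.
apply/asboolP; split=> [|B properB zfB].
  by apply: zero_forcing_pair; rewrite !inordK //; lia.
have [x xB seed] := path_zero_forcing_seed zfB.
have /subsetP subB := proper_sub properB.
move: (subB x xB); rewrite S0E => x12.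
case: seed => [x0|xmax|[y yB yx]]; first by move: x12; rewrite x0.
  by move: x12; rewrite xmax /=; lia.
have := subB y yB; rewrite S0E => y12.
move/properP: properB => [_ [z zS0 /negP]]; apply; move: zS0; rewrite S0E.
case/orP => /eqP zv; [rewrite (_ : z = x) | rewrite (_ : z = y)] => //.
  all: by apply/val_inj => /=; lia.
Qed.

(* Shifting by one maps such a set into the nonzero vertices, disjointly from
   itself. *)
Lemma sparse_card_le (S : {set V}) : ord0 \notin S -> ord_max \notin S ->
  (forall x y : V, x \in S -> y \in S -> y != x.+1 :> nat) -> #|S| <= m./2.
Proof.
move=> S'0 S'max sparse; rewrite geq_half_double.
have lt_m x : x \in S -> x < m.
  move=> xS; have x'max : x != ord_max by apply: contraNneq S'max => <-.
  by move: (ltn_ord x) x'max; rewrite -val_eqE /=; lia.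
pose shift (x : V) : V := inord x.+1.
have shiftE x : x \in S -> shift x = x.+1 :> nat by move=> /lt_m xm; rewrite inordK.
have shift_inj : {in S &, injective shift}.
  move=> x y xS yS /(congr1 (@nat_of_ord _)).
  by rewrite !shiftE // => /succn_inj /val_inj.
have disj : S :&: shift @: S = set0.
  apply/setP => y; rewrite !inE; apply/negP => /andP [yS /imsetP [x xS yx]].
  by move: (sparse x y xS yS); rewrite yx shiftE // eqxx.
have sub : S :|: shift @: S \subset [set~ ord0].
  apply/subsetP => y; rewrite !inE => /orP [yS | /imsetP [x xS ->]].
    by apply: contraNneq S'0 => <-.
  by rewrite -val_eqE /= shiftE.
move: (subset_leq_card sub); rewrite cardsC1 card_ord cardsU disj cards0 subn0.
by rewrite card_in_imset // addnn.
Qed.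

Lemma path_ZIr_card_le S : 4 <= m -> ZIr_set adj S -> #|S| <= m./2.
Proof.
move=> m4 ZIrS; have [S_small|S_big] := leqP #|S| 2; first lia.
have uncovered x y : (forall F, fort adj F -> (x \in F) || (y \in F)) ->
    x \in S -> y \in S -> False.
  move=> cover xS yS; move: (subset_leq_card (ZIr_set_sub_cover cover ZIrS xS yS)).
  by rewrite cards2; case: (_ != _); lia.
apply: sparse_card_le.
- by apply/negP => S0; apply: (uncovered _ _ _ S0 S0) => F /path_fort_ord0 ->.
- by apply/negP => Smax; apply: (uncovered _ _ _ Smax Smax) => F /path_fort_ord_max ->.
- move=> x y xS yS; apply/eqP => yx; apply: (uncovered x y) => // F fortF.
  by apply: path_fort_adj; rewrite // /path_adj; apply/orP; left; apply/eqP.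
Qed.

Definition odd_set : {set V} := [set inord j.*2.+1 | j : 'I_m./2].

Lemma mem_odd_set (y : V) : y \in odd_set -> odd y && (y < m).
Proof.
case/imsetP => j _ ->; move: (ltn_ord j) => j_lt.
by rewrite inordK /= ?odd_double; lia.
Qed.

Lemma card_odd_set : #|odd_set| = m./2.
Proof.
rewrite card_imset ?card_ord // => i j.
move: (ltn_ord i) (ltn_ord j) => i_lt j_lt /(congr1 (@nat_of_ord _)).
by rewrite !inordK; try lia; move=> ij; apply/val_inj => /=; lia.
Qed.

Lemma ZIr_odd_set : ZIr_set adj odd_set.
Proof.
apply: ZIr_set_independent => [u v /mem_odd_set/andP [ou _] /mem_odd_set/andP [ov _]|].
  by apply/negP => /orP [] /eqP uv; move: ou ov; rewrite -uv /=; case: (odd _).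
move=> v /mem_odd_set/andP [ov vm]; have v_gt0 : 0 < v by case: (nat_of_ord v) ov.
rewrite path_nbhd_interior ?v_gt0 // cards2 eq_inordE ?inordK; lia.
Qed.

Lemma ZIR_path : 4 <= m -> ZIR adj = m./2.
Proof.
move=> m4; apply: ZIR_eq ZIr_odd_set card_odd_set => S.
exact: path_ZIr_card_le.
Qed.

End Path.

Theorem proposition3p3 :
  (forall n : nat, 1 <= n ->
     zir (@path_adj n) = 1 /\ Z (@path_adj n) = 1) /\
  (forall n : nat, 4 <= n -> Zbar (@path_adj n) = 2) /\
  (forall n : nat, 5 <= n -> ZIR (@path_adj n) = (n - 1)./2).
Proof.
split; [|split]; case=> [|m] // m_ge.
- split; first exact: zir_eq1 (@path_fort_ord0 m).
  exact: Z_eq1 (zero_forcing_ord0 m).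
- exact: Zbar_path.
- by rewrite subn1; exact: ZIR_path.
Qed.
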